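(* Let $0\le k\le l$ be integers. For every $m\ge 1$, $$d_m(g_{l,k})=\begin{cases}\lfloor\tfrac{l+1}{m}\rfloor-1-\lfloor\tfrac{l-k}{m}\rfloor & \text{for } 1\le m\le k,\\ 0 & \text{for } m>k,\end{cases}$$ and, up to a unit, $g_{l,k}=\prod_{m\ge1}\Phi_m^{d_m(g_{l,k})}$.
   Context: In $\mathbb{Z}[q,q^{-1}]$ set $\{i\}_q=q^i-1$, $\{i\}_{q,n}=\{i\}_q\{i-1\}_q\cdots\{i-n+1\}_q$ (equal to $1$ for $n=0$), $\{n\}_q!=\{n\}_{q,n}$. For $0\le i\le k\le l$ set $h_{l,k,i}=\{l-i\}_{q,k-i}\,\{i\}_q!$, and let $g_{l,k}=\mathrm{GCD}(h_{l,k,0},\dots,h_{l,k,k})$, a greatest common divisor in the UFD $\mathbb{Z}[q,q^{-1}]$ (defined up to units $\pm q^j$). For nonzero $a\in\mathbb{Z}[q,q^{-1}]$ and $m\ge1$, $d_m(a)$ is the largest integer $i$ with $a\in\Phi_m^i\mathbb{Z}[q,q^{-1}]$, where $\Phi_m$ is the $m$th cyclotomic polynomial. $\lfloor r\rfloor$ is the floor of $r$. *)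

From HB Require Import structures.
From mathcomp Require Import all_boot all_order all_algebra all_field.
Set Implicit Arguments. Unset Strict Implicit. Unset Printing Implicit Defensive.
Import GRing.Theory Num.Theory.
Local Open Scope ring_scope.

(* Elements of Z[q,q^-1] are represented by polynomials p : {poly int}
   (p stands for the Laurent polynomial p itself; every Laurent polynomial is
   q^-j * p for some polynomial p, i.e. a unit multiple of a polynomial). *)

(* Divisibility in Z[q,q^-1]: a | b  iff  b = a * c with c Laurent, i.e.
   q^j * b = a * c for some j : nat and some polynomial c. *)
Definition ldvd (a b : {poly int}) : Prop :=
  exists (j : nat) (c : {poly int}), 'X^j * b = a * c.

Definition lassoc (a b : {poly int}) : Prop := ldvd a b /\ ldvd b a.

Definition is_lgcd (g : {poly int}) (hs : seq {poly int}) : Prop :=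
  (forall h, h \in hs -> ldvd g h) /\
  (forall d : {poly int}, (forall h, h \in hs -> ldvd d h) -> ldvd d g).

Definition qbr (i : nat) : {poly int} := 'X^i - 1.

(* {i}_{q,n} = {i}_q {i-1}_q ... {i-n+1}_q  (= 1 for n = 0);
   only used with n <= i, so no truncated subtraction occurs. *)
Definition qfall (i n : nat) : {poly int} := \prod_(j < n) qbr (i - j)%N.

Definition qfact (n : nat) : {poly int} := qfall n n.

Definition hlki (l k i : nat) : {poly int} := qfall (l - i) (k - i) * qfact i.

Definition is_dm (m : nat) (a : {poly int}) (n : nat) : Prop :=
  ldvd ('Phi_m ^+ n) a /\ ~ ldvd ('Phi_m ^+ n.+1) a.

Definition dval (l k m : nat) : nat := ((l.+1 %/ m) - 1 - ((l - k) %/ m))%N.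

From HB Require Import structures.
From mathcomp Require Import all_boot all_order all_algebra all_field.
From mathcomp Require Import zify.
From Stdlib Require Import Classical.
Set Implicit Arguments. Unset Strict Implicit. Unset Printing Implicit Defensive.
Import GRing.Theory Num.Theory.

(* Everything is measured by root multiplicities over the algebraic numbers:
   mu x p is the multiplicity of x as a root of p : {poly int}.
   - Arithmetic: at a primitive m-th root of unity, h_{l,k,i} has
     multiplicity (l-i)/m - (l-k)/m + i/m (it counts the multiples of m among
     the exponents of its factors q^j - 1); the minimum of this over i <= k
     is d_m when m <= k and 0 otherwise (mult_g_le, mult_g_attained).
   - Divisibility: over a closed field, p | q iff mu x p <= mu x q for all x;
     for integer polynomials with unit leading coefficient this descends to
     Z[q], and multiplicities at x <> 0 decide divisibility in Z[q,q^-1]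
     (ldvd_of_mu, mu_ldvd).
   - Hence G divides every h_i, so G | g; and at every x <> 0 the
     multiplicity of g is bounded by that of some h_i, which equals that of G,
     so g | G.  The exponents d_m(G) are read off at primitive roots. *)

Local Open Scope nat_scope.

Lemma divn_addS_le a b m : 0 < m -> (a + b).+1 %/ m <= a %/ m + b %/ m + 1.
Proof.
move=> m0; rewrite -ltnS ltn_divLR // {1}(divn_eq a m) {1}(divn_eq b m).
have := ltn_pmod a m0; have := ltn_pmod b m0.
move: (a %/ m) (a %% m) (b %/ m) (b %% m) => qa ra qb rb; nia.
Qed.

Lemma count_multiples m i n : 0 < m -> n <= i ->
  \sum_(j < n) (m %| i - j) = i %/ m - (i - n) %/ m.
Proof.
move=> m0; elim: n => [|n IH] ni; first by rewrite big_ord0 subn0 subnn.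
rewrite big_ord_recr /= IH ?(ltnW ni) //.
have -> : i - n = (i - n.+1).+1 by lia.
have : (i - n.+1).+1 %/ m <= i %/ m by apply: leq_div2r; lia.
rewrite divnS //; move: (i %/ m) ((i - n.+1) %/ m) (m %| (i - n.+1).+1).
by move=> a b [] /=; lia.
Qed.

(* The multiplicity of Phi_m in h_{l,k,i} (see mu_hlki_prim). *)
Definition mult_h (l k m i : nat) : nat := (l - i) %/ m - (l - k) %/ m + i %/ m.

Definition mult_g (l k m : nat) : nat := if m <= k then dval l k m else 0.

Lemma mult_g_le l k m i : 0 < m -> i <= k -> k <= l ->
  mult_g l k m <= mult_h l k m i.
Proof.
move=> m0 ik kl; rewrite /mult_g /mult_h /dval; case: ifP => // _.
have := @divn_addS_le (l - i) i m m0.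
rewrite (_ : (l - i + i).+1 = l.+1); last by lia.
have : (l - k) %/ m <= (l - i) %/ m by apply: leq_div2r; lia.
move: (l.+1 %/ m) ((l - k) %/ m) ((l - i) %/ m) (i %/ m); lia.
Qed.

(* ... and it is attained: at i = k when m > k, at i = (l+1) mod m otherwise. *)
Lemma mult_g_attained l k m : 0 < m -> k <= l ->
  exists2 i, i <= k & mult_h l k m i = mult_g l k m.
Proof.
move=> m0 kl; rewrite /mult_g /mult_h /dval; case: ifP => mk; last first.
  by exists k => //; rewrite subnn (divn_small (m := k)) //; lia.
exists (l.+1 %% m); first by have := ltn_pmod l.+1 m0; lia.
have q0 : 0 < l.+1 %/ m by rewrite divn_gt0 //; lia.
have := divn_eq l.+1 m; have := ltn_pmod l.+1 m0.
move: (l.+1 %/ m) (l.+1 %% m) q0 => q r q0 rm el.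
have -> : l - r = q.-1 * m + m.-1 by nia.
rewrite divnMDl // !(divn_small (m := m.-1)) ?(divn_small (m := r)) //; lia.
Qed.

Local Open Scope ring_scope.

Section FieldMultiplicity.
Variable F : fieldType.
Implicit Types (x : F) (p q : {poly F}).

Lemma mup_le_dvdp x p q : q != 0 -> p %| q -> (mup x p <= mup x q)%N.
Proof.
move=> q0 pq; have p0 : p != 0.
  by apply: contraNneq q0 => p0; move: pq; rewrite p0 dvd0p.
by rewrite mup_geq //; apply: dvdp_trans pq; rewrite -mup_geq.
Qed.

Lemma mup_le1 x q : q != 0 -> (mup x q <= 1)%N -> mup x q = root q x.
Proof. by move=> q0; rewrite -dvdp_XsubCl XsubC_dvd //; case: (mup x q) => [|[|]]. Qed.

Lemma mup_lt_size x q : q != 0 -> (mup x q < size q)%N.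
Proof.
move=> q0; have /(dvdp_leq q0) : ('X - x%:P) ^+ mup x q %| q by rewrite -mup_geq.
by rewrite size_exp_XsubC.
Qed.

End FieldMultiplicity.

Lemma dvdp_mup (F : closedFieldType) (p q : {poly F}) : p != 0 -> q != 0 ->
  (forall x, mup x p <= mup x q)%N -> p %| q.
Proof.
elim: {p}(size p) {-2}p (leqnn (size p)) q => [|n IH] p sp q p0 q0 le_pq.
  by move: p0; rewrite -size_poly_eq0 -leqn0 sp.
have [/eqP/size_poly1P[c c0 ->]|] := eqVneq (size p) 1.
  by rewrite -alg_polyC dvdpZl // dvd1p.
case/closed_rootP => x /factor_theorem[p' ep].
have p'0 : p' != 0 by apply: contraNneq p0 => e; rewrite ep e mul0r.
have : root q x.
  rewrite -dvdp_XsubCl XsubC_dvd //; apply: leq_trans (le_pq x).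
  by rewrite -XsubC_dvd // ep dvdp_mull.
case/factor_theorem=> q' eq; have q'0 : q' != 0.
  by apply: contraNneq q0 => e; rewrite eq e mul0r.
rewrite ep eq dvdp_mul2r ?polyXsubC_eq0 //; apply: IH => // [|y].
  by move: sp; rewrite ep size_Mmonic ?monicXsubC // size_XsubC addn2.
by have := le_pq y; rewrite ep eq !mupM ?polyXsubC_eq0 // leq_add2r.
Qed.

Local Notation toC := (map_poly (intr : int -> algC)).

Definition mu (x : algC) (p : {poly int}) : nat := mup x (toC p).

Lemma size_toC (p : {poly int}) : size (toC p) = size p.
Proof. by rewrite size_map_inj_poly // => a b /intr_inj. Qed.

Lemma toC_eq0 (p : {poly int}) : (toC p == 0) = (p == 0).
Proof. by rewrite -!size_poly_eq0 size_toC. Qed.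

Lemma toC_Xn_sub1 n : toC ('X^n - 1) = 'X^n - 1.
Proof. by rewrite rmorphB rmorph1 /= map_polyXn. Qed.

Lemma Xn_neq0 n : ('X^n : {poly int}) != 0.
Proof. by rewrite monic_neq0 ?monicXn. Qed.

Lemma lead_unit_neq0 (a : {poly int}) : lead_coef a \is a GRing.unit -> a != 0.
Proof. by apply: contraTneq => ->; rewrite lead_coef0 unitr0. Qed.

Lemma mu1 x : mu x 1 = 0%N.
Proof. by rewrite /mu rmorph1 mupNroot ?root1. Qed.

Lemma mu_mul x (p q : {poly int}) : p != 0 -> q != 0 ->
  mu x (p * q) = (mu x p + mu x q)%N.
Proof. by move=> p0 q0; rewrite /mu rmorphM mupM // toC_eq0. Qed.

Lemma mu_prod x (I : Type) (s : seq I) (F : I -> {poly int}) :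
  (forall i, F i != 0) -> mu x (\prod_(i <- s) F i) = (\sum_(i <- s) mu x (F i))%N.
Proof.
move=> F0; elim: s => [|a s IH]; first by rewrite !big_nil mu1.
rewrite !big_cons mu_mul ?IH //.
by rewrite prodf_seq_neq0; elim: s {IH} => //= b s ->; rewrite F0.
Qed.

Lemma mu_exp x (p : {poly int}) n : p != 0 -> mu x (p ^+ n) = (n * mu x p)%N.
Proof.
move=> p0; elim: n => [|n IH]; first by rewrite mu1.
by rewrite exprS mu_mul ?expf_neq0 // IH mulSn.
Qed.

Lemma mu_Xn x n : x != 0 -> mu x 'X^n = 0%N.
Proof. by move=> x0; rewrite /mu map_polyXn mupNroot // /root hornerXn expf_neq0. Qed.

Lemma mu_Xn0 n : mu 0 'X^n = n.
Proof. by rewrite /mu map_polyXn -(subr0 'X) -polyC0 mup_XsubCX eqxx. Qed.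

(* q^n - 1 is separable in characteristic 0: its roots are simple. *)
Lemma mu_Xn_sub1 x n : (0 < n)%N -> mu x ('X^n - 1) = (x ^+ n == 1 : nat).
Proof.
move=> n0; have Xn10 : ('X^n - 1 : {poly algC}) != 0.
  by rewrite -polyC1 monic_neq0 ?monicXnsubC.
rewrite /mu toC_Xn_sub1 mup_le1 //; first by rewrite /root !hornerE subr_eq0.
rewrite leqNgt mup_geq // separable_nosquare ?size_XsubC //.
by apply: separable_Xn_sub_1; rewrite pnatr_eq0 -lt0n.
Qed.

Lemma prim_root_order_uniq (x : algC) m d :
  m.-primitive_root x -> d.-primitive_root x -> d = m.
Proof.
move=> pm pd; apply/eqP; rewrite eqn_dvd.
by rewrite (prim_order_dvd pm) (prim_order_dvd pd) !prim_expr_order ?eqxx.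
Qed.

(* Phi_d has exactly the primitive d-th roots of unity as roots, all simple
   because Phi_d divides q^d - 1. *)
Lemma mu_Phi x d : (0 < d)%N -> mu x 'Phi_d = (d.-primitive_root x : nat).
Proof.
move=> d0; have [w pw] := C_prim_root_exists d0.
have Phi_dvd : cyclotomic w d %| 'X^d - 1.
  rewrite (prod_cyclotomic pw) (big_rem d) -?dvdn_divisors //=.
  by rewrite divnn d0 expr1 dvdp_mulIl.
have Xn10 : ('X^d - 1 : {poly algC}) != 0.
  by rewrite -polyC1 monic_neq0 ?monicXnsubC.
rewrite /mu (Cintr_Cyclotomic pw) mup_le1 ?monic_neq0 ?cyclotomic_monic //.
  by rewrite root_cyclotomic.
apply: leq_trans (mup_le_dvdp x Xn10 Phi_dvd) _.
by have := mu_Xn_sub1 x d0; rewrite /mu toC_Xn_sub1 => ->; case: (_ == _).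
Qed.

Lemma mu_ldvd x (a b : {poly int}) : x != 0 -> b != 0 -> ldvd a b ->
  (mu x a <= mu x b)%N.
Proof.
move=> x0 b0 [j [c e]]; have : a * c != 0 by rewrite -e mulf_neq0 ?Xn_neq0.
rewrite mulf_eq0 negb_or => /andP[a0 c0]; have := congr1 (mu x) e.
by rewrite !mu_mul ?Xn_neq0 // mu_Xn // add0n => ->; apply: leq_addr.
Qed.

(* Conversely, divisibility over algC descends to Z[q] when the divisor has
   a unit leading coefficient: the Euclidean remainder must vanish. *)
Lemma dvd_of_mu (a b : {poly int}) : lead_coef a \is a GRing.unit -> b != 0 ->
  (forall x : algC, (mu x a <= mu x b)%N) -> exists c, b = a * c.
Proof.
move=> ua b0 le_ab; have a0 := lead_unit_neq0 ua.
have dvdC : toC a %| toC b by apply: dvdp_mup; rewrite ?toC_eq0.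
have eb := Pdiv.IdomainUnit.divp_eq ua b.
suff r0 : b %% a = 0 by exists (b %/ a); rewrite {1}eb r0 addr0 mulrC.
apply/eqP; apply: contraTT (Pdiv.Idomain.ltn_modpN0 b a0); rewrite -leqNgt => r0.
rewrite -size_toC -(size_toC (b %% a)) dvdp_leq ?toC_eq0 //.
by move: dvdC; rewrite {1}eb rmorphD rmorphM /= dvdp_addr // dvdp_mull.
Qed.

(* In Z[q,q^-1] the point 0 does not count: multiplying b by q^(size a)
   absorbs any multiplicity of a at 0. *)
Lemma ldvd_of_mu (a b : {poly int}) : lead_coef a \is a GRing.unit -> b != 0 ->
  (forall x : algC, x != 0 -> (mu x a <= mu x b)%N) -> ldvd a b.
Proof.
move=> ua b0 le_ab; exists (size a).
apply: dvd_of_mu; rewrite ?mulf_neq0 ?Xn_neq0 // => x.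
rewrite mu_mul ?Xn_neq0 //; have [->|x0] := eqVneq x 0; last by rewrite mu_Xn // le_ab.
rewrite mu_Xn0 ltnW // ltn_addr // -(size_toC a) mup_lt_size //.
by rewrite toC_eq0 lead_unit_neq0.
Qed.

Lemma ldvd_monic_unit (a b : {poly int}) : ldvd a b -> b \is monic ->
  lead_coef a \is a GRing.unit.
Proof.
move=> [j [c e]] /monicP lb.
have : lead_coef a * lead_coef c \is a GRing.unit.
  by rewrite -lead_coefM -e lead_coefM lead_coefXn lb mul1r unitr1.
by rewrite unitrM => /andP[].
Qed.

Lemma ldvd_trans (a b c : {poly int}) : ldvd a b -> ldvd b c -> ldvd a c.
Proof.
move=> [i [u eb]] [j [v ec]]; exists (i + j)%N, (u * v).
by rewrite exprD -mulrA ec mulrA eb mulrA.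
Qed.

Lemma is_dm_lassoc m (a b : {poly int}) n : lassoc a b -> is_dm m a n -> is_dm m b n.
Proof.
move=> [ab ba] [pa npa]; split; first exact: ldvd_trans pa ab.
by move=> pb; apply: npa; apply: ldvd_trans pb ba.
Qed.

Lemma root_of_unity_cases (x : algC) :
  (exists2 m, (0 < m)%N & m.-primitive_root x) \/
  (forall j, (0 < j)%N -> x ^+ j != 1).
Proof.
have [|no_prim] := classic (exists2 m, (0 < m)%N & m.-primitive_root x).
  by left.
right=> j j0; apply/eqP => xj; have [m pm _] := prim_order_exists j0 xj.
by apply: no_prim; exists m => //; apply: prim_order_gt0 pm.
Qed.

Lemma qbr_monic n : (0 < n)%N -> qbr n \is monic.
Proof. by move=> n0; rewrite /qbr -polyC1 monicXnsubC. Qed.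

Lemma qfall_monic i n : (n <= i)%N -> qfall i n \is monic.
Proof.
by move=> ni; apply: monic_prod => j _; apply: qbr_monic; have := ltn_ord j; lia.
Qed.

Lemma hlki_monic l k i : (i <= k)%N -> (k <= l)%N -> hlki l k i \is monic.
Proof. by move=> ik kl; rewrite /hlki /qfact monicMl qfall_monic //; lia. Qed.

Lemma mu_qfall x i n : (n <= i)%N ->
  mu x (qfall i n) = (\sum_(j < n) (x ^+ (i - j) == 1%R : nat))%N.
Proof.
move=> ni; rewrite /qfall mu_prod => [|j]; last first.
  by rewrite monic_neq0 ?qbr_monic //; have := ltn_ord j; lia.
by apply: eq_bigr => j _; rewrite /qbr mu_Xn_sub1 //; have := ltn_ord j; lia.
Qed.

Lemma mu_qfall_prim x m i n : m.-primitive_root x -> (n <= i)%N ->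
  mu x (qfall i n) = (i %/ m - (i - n) %/ m)%N.
Proof.
move=> px ni; rewrite mu_qfall // -count_multiples ?(prim_order_gt0 px) //.
by apply: eq_bigr => j _; rewrite (prim_order_dvd px).
Qed.

Lemma mu_qfall_nonroot x i n : (forall j, (0 < j)%N -> x ^+ j != 1) ->
  (n <= i)%N -> mu x (qfall i n) = 0%N.
Proof.
move=> x_nru ni; rewrite mu_qfall // big1 // => j _.
by rewrite (negbTE (x_nru _ _)) //; have := ltn_ord j; lia.
Qed.

Definition gprod (l k : nat) : {poly int} :=
  \prod_(1 <= m < k.+1) 'Phi_m ^+ dval l k m.

Lemma gprod_monic l k : gprod l k \is monic.
Proof. by apply: monic_prod => d _; rewrite monic_exp ?Cyclotomic_monic. Qed.

Lemma mu_gprod x l k :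
  mu x (gprod l k) = (\sum_(1 <= d < k.+1) dval l k d * d.-primitive_root x)%N.
Proof.
rewrite /gprod mu_prod => [|d]; last by rewrite monic_neq0 ?monic_exp ?Cyclotomic_monic.
apply: eq_big_nat => d /andP[d0 _].
by rewrite mu_exp ?mu_Phi ?monic_neq0 ?Cyclotomic_monic.
Qed.

Lemma mu_gprod_prim x m l k : (0 < m)%N -> m.-primitive_root x ->
  mu x (gprod l k) = mult_g l k m.
Proof.
move=> m0 px; rewrite mu_gprod.
rewrite (eq_big_nat _ _ (F2 := fun d => if d == m then dval l k d else 0%N)).
  by rewrite -big_mkcond big_nat1_eq /mult_g m0 ltnS.
move=> d _; have [->|ne] := eqVneq d m; first by rewrite px muln1.
case: (boolP (d.-primitive_root x)) => [pd|]; last by rewrite muln0.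
by case/eqP: ne; apply: prim_root_order_uniq px pd.
Qed.

Lemma mu_gprod_nonroot x l k : (forall j, (0 < j)%N -> x ^+ j != 1) ->
  mu x (gprod l k) = 0%N.
Proof.
move=> x_nru; rewrite mu_gprod big1_seq // => d _.
case: (boolP (d.-primitive_root x)) => [pd|]; last by rewrite muln0.
by have := x_nru d (prim_order_gt0 pd); rewrite (prim_expr_order pd) eqxx.
Qed.

(* d_m(G) is the claimed value: read it off at a primitive m-th root. *)
Lemma is_dm_gprod l k m : (0 < m)%N -> is_dm m (gprod l k) (mult_g l k m).
Proof.
move=> m0; have [z pz] := C_prim_root_exists m0.
have z0 : z != 0 by rewrite (prim_root_eq0 pz) -lt0n.
have G0 : gprod l k != 0 by rewrite monic_neq0 ?gprod_monic.
have Phi0 : 'Phi_m != 0 by rewrite monic_neq0 ?Cyclotomic_monic.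
split.
  apply: ldvd_of_mu => // [|x _].
    by rewrite (monicP _) ?unitr1 ?monic_exp ?Cyclotomic_monic.
  rewrite mu_exp // mu_Phi //.
  case: (boolP (m.-primitive_root x)) => [px|]; last by rewrite muln0.
  by rewrite muln1 (mu_gprod_prim _ _ m0 px).
move/(mu_ldvd z0 G0); rewrite mu_exp // mu_Phi // pz muln1.
by rewrite (mu_gprod_prim _ _ m0 pz) ltnn.
Qed.

Section MultiplicitiesOfH.
Variables (l k : nat).
Hypothesis kl : (k <= l)%N.

Lemma mu_hlki_prim x m i : m.-primitive_root x -> (i <= k)%N ->
  mu x (hlki l k i) = mult_h l k m i.
Proof.
move=> px ik; rewrite /hlki /qfact mu_mul ?monic_neq0 ?qfall_monic //; try lia.
rewrite !(mu_qfall_prim px) // ?subnn ?div0n ?subn0; try lia.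
by rewrite /mult_h (_ : l - i - (k - i) = l - k)%N //; lia.
Qed.

Lemma mu_hlki_nonroot x i : (forall j, (0 < j)%N -> x ^+ j != 1) ->
  (i <= k)%N -> mu x (hlki l k i) = 0%N.
Proof.
move=> x_nru ik; rewrite /hlki /qfact mu_mul ?monic_neq0 ?qfall_monic //; try lia.
by rewrite !mu_qfall_nonroot //; lia.
Qed.

Lemma mu_gprod_le x i : (i <= k)%N -> (mu x (gprod l k) <= mu x (hlki l k i))%N.
Proof.
move=> ik; have [[m m0 px]|x_nru] := root_of_unity_cases x.
  by rewrite (mu_gprod_prim _ _ m0 px) (mu_hlki_prim px) // mult_g_le.
by rewrite mu_gprod_nonroot.
Qed.

Lemma mu_gprod_attained x :
  exists2 i, (i <= k)%N & mu x (hlki l k i) = mu x (gprod l k).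
Proof.
have [[m m0 px]|x_nru] := root_of_unity_cases x.
  have [i ik Ei] := mult_g_attained m0 kl.
  by exists i => //; rewrite (mu_hlki_prim px) // (mu_gprod_prim _ _ m0 px).
by exists 0%N => //; rewrite mu_hlki_nonroot ?mu_gprod_nonroot.
Qed.

End MultiplicitiesOfH.

Theorem lemma4p1 (k l : nat) (hkl : (k <= l)%N) (g : {poly int})
  (hg : is_lgcd g [seq hlki l k i | i <- iota 0 k.+1]) :
  (forall m : nat, (0 < m)%N ->
     is_dm m g (if (m <= k)%N then dval l k m else 0%N)) /\
  lassoc g (\prod_(1 <= m < k.+1) 'Phi_m ^+ dval l k m).
Proof.
have g_dvd_h i : (i <= k)%N -> ldvd g (hlki l k i).
  by move=> ik; apply: hg.1; apply: map_f; rewrite mem_iota ltnS ik.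
have h0 i : (i <= k)%N -> hlki l k i != 0.
  by move=> ik; rewrite monic_neq0 ?hlki_monic.
have G0 : gprod l k != 0 by rewrite monic_neq0 ?gprod_monic.
have G_dvd_g : ldvd (gprod l k) g.
  apply: hg.2 => h /mapP[i]; rewrite mem_iota ltnS => /andP[_ ik] ->.
  apply: ldvd_of_mu => [||x _]; rewrite ?(monicP (gprod_monic l k)) ?unitr1 ?h0 //.
  exact: mu_gprod_le.
have g_unit : lead_coef g \is a GRing.unit.
  exact: ldvd_monic_unit (g_dvd_h 0%N (leq0n k)) (hlki_monic (leq0n k) hkl).
have g_dvd_G : ldvd g (gprod l k).
  apply: ldvd_of_mu g_unit G0 _ => x x0.
  have [i ik <-] := mu_gprod_attained hkl x.
  exact: mu_ldvd x0 (h0 i ik) (g_dvd_h i ik).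
split=> [m m0|]; last by split.
exact: is_dm_lassoc (is_dm_gprod l k m0).
Qed.
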